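(* Let $S$ be an additively reduced semidomain and $G$ a torsion-free abelian group. Let $f=\sum_{i=0}^n s_ix^{g_i}\in S[G]$ with $g_0>g_1>\dots>g_n$ and $s_i\in S\setminus\{0\}$. Then: (1) if $|\operatorname{supp}(f)|\ge2$ and $2g_1<g_0+g_n$, then $f$ is monolithic; (2) if $|\operatorname{supp}(f)|>3$ and $2g_1\le g_0+g_n$, then $f$ is monolithic.
   Context: A semidomain is a subsemiring (containing $0$ and $1$) of an integral domain. $S$ is additively reduced if $0$ is the only invertible element of $(S,+)$. $G$ carries a fixed total order compatible with addition. $S[G]$ is the semidomain of formal finite sums $\sum_{g\in G}s_gx^g$ with polynomial operations; $\operatorname{supp}(f)$ is the set of exponents with nonzero coefficient. A nonzero $f\in S[G]$ is monolithic if whenever $f=pq$ with $p,q\in S[G]$, one of $p,q$ is a monomial $sx^g$. *)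

From HB Require Import structures.
From mathcomp Require Import all_boot all_order all_algebra.
From mathcomp Require Import finmap.
Set Implicit Arguments. Unset Strict Implicit. Unset Printing Implicit Defensive.
Import GRing.Theory.
Local Open Scope ring_scope.

Definition semidomain (R : idomainType) (S : {pred R}) : Prop :=
  [/\ 0 \in S, 1 \in S,
      (forall x y, x \in S -> y \in S -> x + y \in S) &
      (forall x y, x \in S -> y \in S -> x * y \in S)].

(* 0 is the only invertible element of (S,+). *)
Definition additively_reduced (R : idomainType) (S : {pred R}) : Prop :=
  forall x y, x \in S -> y \in S -> x + y = 0 -> x = 0.

Definition torsion_free (G : zmodType) : Prop :=
  forall (x : G) (k : nat), (0 < k)%N -> x *+ k = 0 -> x = 0.

Definition compatible_total_order (G : zmodType) (le : rel G) : Prop :=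
  [/\ reflexive le, antisymmetric le, transitive le, total le &
      (forall a b c, le a b -> le (a + c) (b + c))].

Definition ltof (G : zmodType) (le : rel G) (a b : G) : bool := le a b && (a != b).

(* Elements of R[G]: finitely supported coefficient functions G -> R.
   S[G] consists of those whose coefficients all lie in S. *)
Definition gpoly (R : idomainType) (G : zmodType) := {fsfun G -> R with 0}.

Definition in_SG (R : idomainType) (G : zmodType) (S : {pred R}) (p : gpoly R G) : Prop :=
  forall h, p h \in S.

Definition gmul (R : idomainType) (G : zmodType) (p q : gpoly R G) (h : G) : R :=
  \sum_(a <- finsupp p) \sum_(b <- finsupp q | a + b == h) p a * q b.

Definition is_monomial (R : idomainType) (G : zmodType) (p : gpoly R G) : Prop :=
  exists (s : R) (g : G), forall h, p h = (if h == g then s else 0).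

Definition monolithic (R : idomainType) (G : zmodType) (S : {pred R}) (f : G -> R) : Prop :=
  (exists h, f h != 0) /\
  forall p q : gpoly R G, in_SG S p -> in_SG S q ->
    (forall h, f h = gmul p q h) -> is_monomial p \/ is_monomial q.

From HB Require Import structures.
From mathcomp Require Import all_boot all_order all_algebra.
From mathcomp Require Import finmap.
From Stdlib Require Import Classical.
Set Implicit Arguments. Unset Strict Implicit. Unset Printing Implicit Defensive.
Import GRing.Theory.
Local Open Scope ring_scope.

(* Suppose f = p q with neither p nor q a monomial.  As S is additively
   reduced, no cancellation occurs, so supp f = supp p + supp q.  Let a0 > a1
   and b0 > b1 be the two largest exponents of p and q.  Then g0 = a0 + b0,
   the cross sums a0 + b1 and a1 + b0 are other exponents of f, hence <= g1,
   and a1 + b1 >= gn.  Therefore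
     g0 + gn <= (a0 + b0) + (a1 + b1) = (a0 + b1) + (a1 + b0) <= 2 g1,
   which rules out (1).  If 2 g1 <= g0 + gn, all these inequalities are
   equalities; then every exponent a of p other than a0 satisfies
   a + b1 >= gn = a1 + b1, so supp p = {a0, a1}, likewise supp q = {b0, b1},
   and f has at most the three exponents g0, g1, gn, which rules out (2). *)

Section OrderedGroup.
Variables (G : zmodType) (le : rel G).
Hypothesis hle : compatible_total_order le.

Lemma leG_refl : reflexive le. Proof. by case: hle. Qed.
Lemma leG_trans : transitive le. Proof. by case: hle. Qed.
Lemma leG_total : total le. Proof. by case: hle. Qed.

Lemma leG_anti a b : le a b -> le b a -> a = b.
Proof. by case: hle => _ anti _ _ _ hab hba; apply: anti; rewrite hab hba. Qed.

Lemma leG_add2r c a b : le (a + c) (b + c) = le a b.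
Proof.
case: hle => _ _ _ _ addr; apply/idP/idP; last exact: addr.
by move=> /(addr _ _ (- c)); rewrite !addrK.
Qed.

Lemma leG_add2l c a b : le (c + a) (c + b) = le a b.
Proof. by rewrite ![c + _]addrC leG_add2r. Qed.

Lemma leG_add a b c d : le a b -> le c d -> le (a + c) (b + d).
Proof.
move=> hab hcd; apply: (@leG_trans (b + c)); first by rewrite leG_add2r.
by rewrite leG_add2l.
Qed.

Lemma leG_add_eq a b c d : le a b -> le c d -> a + c = b + d -> a = b.
Proof.
move=> hab hcd e; apply: leG_anti => //.
by rewrite -(leG_add2r c) e leG_add2l.
Qed.

Definition top_two (A : seq G) (a0 a1 : G) : Prop :=
  [/\ a0 \in A, a1 \in A, a1 != a0,
      {in A, forall a, le a a0} & {in A, forall a, a != a0 -> le a a1}].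

Lemma top_two_exists (A : seq G) :
  uniq A -> (1 < size A)%N -> exists a0 a1, top_two A a0 a1.
Proof.
move=> uniqA sizeA; pose ge a b := le b a.
have ge_trans : transitive ge by move=> b a c hba hcb; apply: leG_trans hcb hba.
have sorted_ge : sorted ge (sort ge A).
  by apply: sort_sorted => a b; apply: leG_total.
have permA : perm_eq (sort ge A) A by rewrite perm_sort.
move: sorted_ge (perm_mem permA) (perm_uniq permA); rewrite -(perm_size permA) in sizeA.
case: (sort ge A) sizeA => [|a0 [|a1 r]] // _ path0 memA.
rewrite uniqA => /andP[notin0 _]; exists a0, a1; split.
- by rewrite -memA mem_head.
- by rewrite -memA !inE eqxx orbT.
- by apply: contraNneq notin0 => <-; rewrite mem_head.
- move=> a; rewrite -memA => /predU1P[-> | ar]; first exact: leG_refl.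
  by have /allP := order_path_min ge_trans path0; apply.
- move=> a; rewrite -memA => /predU1P[-> /eqP //|] /predU1P[-> _ | ar _].
    exact: leG_refl.
  by have /allP := order_path_min ge_trans (path_sorted path0); apply.
Qed.

Lemma nonmonomial_top_two (R : idomainType) (p : gpoly R G) :
  ~ is_monomial p -> exists a0 a1, top_two (finsupp p) a0 a1.
Proof.
move=> nonmono; apply: top_two_exists; first exact: fset_uniq.
rewrite ltnNge; apply/negP => small; apply: nonmono.
case E: (finsupp p : seq G) small => [|a [|? ?]] // _.
- exists 0, 0 => h; rewrite if_same.
  have : h \notin (finsupp p : seq G) by rewrite E.
  by rewrite mem_finsupp negbK => /eqP.
- exists (p a), a => h; case: eqP => [-> // | /eqP ne_ha].
  have : h \notin (finsupp p : seq G) by rewrite E inE.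
  by rewrite mem_finsupp negbK => /eqP.
Qed.

Section DecreasingExponents.
Variables (n : nat) (g : nat -> G).
Hypothesis hg : forall i, (i < n)%N -> ltof le (g i.+1) (g i).

Lemma exponents_antitone i j : (i <= j <= n)%N -> le (g j) (g i).
Proof.
elim: j => [|j IHj] /andP[le_ij le_jn]; first by case: i le_ij => // _; exact: leG_refl.
case: (ltngtP i j.+1) le_ij => // [lt_ij _ | -> _]; last exact: leG_refl.
have /andP[le_next _] := hg le_jn.
by apply: leG_trans le_next (IHj _); rewrite -ltnS lt_ij ltnW.
Qed.

Lemma exponents_neq i j : (i < j <= n)%N -> g j != g i.
Proof.
move=> /andP[lt_ij le_jn]; have /andP[le_next ne_next] := hg (leq_trans lt_ij le_jn).
apply: contra_neq ne_next => eq_ji; apply: leG_anti => //.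
by rewrite -eq_ji exponents_antitone ?lt_ij.
Qed.

Section Sumset.
Variables (A B : seq G) (a0 a1 b0 b1 : G).
Hypotheses (topA : top_two A a0 a1) (topB : top_two B b0 b1).
Hypothesis sumset_sub :
  {in A & B, forall a b, exists2 i, (i <= n)%N & g i = a + b}.
Hypothesis sumset_cover : forall i, (i <= n)%N ->
  exists a b, [/\ a \in A, b \in B & a + b = g i].

Lemma sumset_top : g 0%N = a0 + b0.
Proof.
case: topA topB => A0 _ _ maxA _ [B0 _ _ maxB _].
have [i le_in gi] := sumset_sub A0 B0; apply: leG_anti.
  have [a [b [Aa Bb <-]]] := sumset_cover (leq0n n).
  by apply: leG_add; [apply: maxA | apply: maxB].
by rewrite -gi exponents_antitone.
Qed.

Lemma sumset_below_g1 :
  {in A & B, forall a b, a + b != a0 + b0 -> le (a + b) (g 1%N)}.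
Proof.
move=> a b Aa Bb ne_top; have [[|i] le_in gi] := sumset_sub Aa Bb.
  by move: ne_top; rewrite -gi sumset_top eqxx.
by rewrite -gi exponents_antitone.
Qed.

Lemma sumset_above_gn : {in A & B, forall a b, le (g n) (a + b)}.
Proof.
move=> a b Aa Bb; have [i le_in <-] := sumset_sub Aa Bb.
by apply: exponents_antitone; rewrite le_in leqnn.
Qed.

Lemma cross_sums_le_g1 : le (a0 + b1) (g 1%N) /\ le (a1 + b0) (g 1%N).
Proof.
case: topA topB => A0 A1 ne_a _ _ [B0 B1 ne_b _ _].
split; apply: sumset_below_g1 => //.
  by apply: contra ne_b => /eqP /addrI ->.
by apply: contra ne_a => /eqP /addIr ->.
Qed.

Lemma cross_sums_sum : (a0 + b1) + (a1 + b0) = g 0%N + (a1 + b1).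
Proof. by rewrite addrACA [b1 + b0]addrC addrACA sumset_top. Qed.

Lemma cross_sums_between :
  le (g 0%N + g n) ((a0 + b1) + (a1 + b0)) /\
  le ((a0 + b1) + (a1 + b0)) (g 1%N *+ 2).
Proof.
have [le01 le10] := cross_sums_le_g1; split; last by rewrite mulr2n leG_add.
case: topA topB => _ A1 _ _ _ [_ B1 _ _ _].
by rewrite cross_sums_sum leG_add2l sumset_above_gn.
Qed.

Lemma sumset_not_lt : ~~ ltof le (g 1%N *+ 2) (g 0%N + g n).
Proof.
have [lo hi] := cross_sums_between.
by apply/andP=> -[le_g1 /eqP]; apply; apply: leG_anti le_g1 (leG_trans lo hi).
Qed.

Lemma tight_cross_sums : le (g 1%N *+ 2) (g 0%N + g n) ->
  [/\ a0 + b1 = g 1%N, a1 + b0 = g 1%N & a1 + b1 = g n].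
Proof.
move=> le_g1; have [lo hi] := cross_sums_between.
have [le01 le10] := cross_sums_le_g1.
have cross_eq : (a0 + b1) + (a1 + b0) = g 1%N + g 1%N.
  by rewrite -mulr2n; apply: leG_anti hi (leG_trans le_g1 lo).
have top_eq : g 0%N + g n = (a0 + b1) + (a1 + b0).
  by apply: leG_anti lo (leG_trans hi le_g1).
split; first exact: leG_add_eq le01 le10 cross_eq.
  by apply: leG_add_eq le10 le01 _; rewrite addrC.
by apply: (@addrI _ (g 0%N)); rewrite -cross_sums_sum top_eq.
Qed.

Lemma tight_supports : le (g 1%N *+ 2) (g 0%N + g n) ->
  {in A, forall a, a = a0 \/ a = a1} /\ {in B, forall b, b = b0 \/ b = b1}.
Proof.
move=> /tight_cross_sums[_ _ bottom].
case: topA topB => _ A1 _ _ nextA [_ B1 _ _ nextB].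
split=> [a Aa | b Bb].
  have [-> | ne_a] := eqVneq a a0; [by left | right].
  apply: leG_anti (nextA a Aa ne_a) _.
  by rewrite -(leG_add2r b1) bottom sumset_above_gn.
have [-> | ne_b] := eqVneq b b0; [by left | right].
apply: leG_anti (nextB b Bb ne_b) _.
by rewrite -(leG_add2l a1) bottom sumset_above_gn.
Qed.

Lemma sumset_not_le : (3 <= n)%N -> ~ le (g 1%N *+ 2) (g 0%N + g n).
Proof.
move=> n_ge3 le_g1; have [e01 e10 e11] := tight_cross_sums le_g1.
have [onlyA onlyB] := tight_supports le_g1.
have [a [b [Aa Bb e2]]] := sumset_cover (ltnW n_ge3).
have := @exponents_neq 0%N 2%N (ltnW n_ge3).
have := @exponents_neq 1%N 2%N (ltnW n_ge3).
have := @exponents_neq 2%N n; rewrite n_ge3 leqnn => /(_ isT).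
by rewrite -e2 sumset_top; case: (onlyA a Aa) => ->; case: (onlyB b Bb) => ->;
  rewrite ?e01 ?e10 ?e11 eqxx.
Qed.

End Sumset.
End DecreasingExponents.
End OrderedGroup.

Section ReducedSemidomain.
Variables (R : idomainType) (S : {pred R}).
Hypotheses (hS : semidomain S) (hred : additively_reduced S).

Lemma semidomain_sum (I : Type) (r : seq I) (P : pred I) (F : I -> R) :
  (forall i, P i -> F i \in S) -> \sum_(i <- r | P i) F i \in S.
Proof. by case: hS => S0 _ SD _; apply: (big_ind (fun x => x \in S)). Qed.

Lemma reduced_sum_eq0 (I : eqType) (r : seq I) (P : pred I) (F : I -> R) :
  (forall i, P i -> F i \in S) -> \sum_(i <- r | P i) F i = 0 ->
  {in r, forall i, P i -> F i = 0}.
Proof.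
move=> SF; elim: r => [|x r IHr] //; rewrite big_cons.
have Sr := semidomain_sum r SF.
case: ifP => Px sum0 i; rewrite inE => /predU1P[-> | ir] Pi.
- exact: hred (SF x Px) Sr sum0.
- by apply: IHr => //; apply: hred Sr (SF x Px) _; rewrite addrC.
- by rewrite Px in Pi.
- exact: IHr.
Qed.

Lemma gmul_neq0 (G : zmodType) (p q : gpoly R G) h :
  in_SG S p -> in_SG S q ->
  gmul p q h != 0 <-> exists a b, [/\ p a != 0, q b != 0 & a + b = h].
Proof.
move=> Sp Sq; have Spq a b : p a * q b \in S by case: hS => _ _ _ SM; apply: SM.
split=> [gmul_nz | [a [b [pa qb ab]]]].
  apply: NNPP => none; move/eqP: gmul_nz; apply.
  apply: big1_seq => a /andP[_ pa]; apply: big1_seq => b /andP[/eqP ab qb].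
  by exfalso; apply: none; exists a, b; rewrite -!mem_finsupp.
apply/eqP => gmul0.
have Sinner a := semidomain_sum (finsupp q) (fun b (_ : a + b == h) => Spq a b).
have inner0 := reduced_sum_eq0 (fun a _ => Sinner a) gmul0.
have pa_supp : a \in finsupp p by rewrite mem_finsupp.
have qb_supp : b \in finsupp q by rewrite mem_finsupp.
have := reduced_sum_eq0 (fun b _ => Spq a b) (inner0 a pa_supp isT) qb_supp.
rewrite ab eqxx => /(_ isT) /eqP.
by rewrite mulf_eq0 (negbTE pa) (negbTE qb).
Qed.

Lemma sum_terms_supp (G : zmodType) (n : nat) (s : nat -> R) (g : nat -> G) h :
  \sum_(i < n.+1 | g i == h) s i != 0 -> exists2 i, (i <= n)%N & g i = h.
Proof.
move=> /eqP sum_nz; apply: NNPP => none; apply: sum_nz.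
by apply: big1 => i /eqP gi; exfalso; apply: none; exists i; first exact: (ltn_ord i).
Qed.

Lemma sum_terms_at_neq0 (G : zmodType) (n : nat) (s : nat -> R) (g : nat -> G) i :
  (forall j, (j <= n)%N -> s j \in S /\ s j != 0) -> (i <= n)%N ->
  \sum_(j < n.+1 | g j == g i) s j != 0.
Proof.
move=> hs le_in; apply/eqP => sum0.
have Ss (j : 'I_n.+1) : g j == g i -> s j \in S by have [] := hs j (ltn_ord j).
have i_enum := mem_index_enum (Ordinal (le_in : (i < n.+1)%N)).
have := reduced_sum_eq0 Ss sum0 i_enum (eqxx _).
by have [_ /eqP] := hs i le_in.
Qed.

Lemma factor_sumset (G : zmodType) (n : nat) (s : nat -> R) (g : nat -> G)
    (p q : gpoly R G) :
  (forall i, (i <= n)%N -> s i \in S /\ s i != 0) -> in_SG S p -> in_SG S q ->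
  (forall h, \sum_(i < n.+1 | g i == h) s i = gmul p q h) ->
  {in finsupp p & finsupp q, forall a b, exists2 i, (i <= n)%N & g i = a + b} /\
  (forall i, (i <= n)%N ->
     exists a b, [/\ a \in finsupp p, b \in finsupp q & a + b = g i]).
Proof.
move=> hs Sp Sq fpq; split=> [a b pa qb | i le_in].
  apply: (@sum_terms_supp _ n s); rewrite fpq; apply/(gmul_neq0 _ Sp Sq).
  by exists a, b; rewrite -!mem_finsupp.
have := sum_terms_at_neq0 g hs le_in.
rewrite fpq => /(gmul_neq0 _ Sp Sq)[a [b [pa qb ab]]].
by exists a, b; rewrite !mem_finsupp.
Qed.

End ReducedSemidomain.

Lemma monolithic_intro (R : idomainType) (G : zmodType) (S : {pred R}) (f : G -> R) :
  (exists h, f h != 0) ->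
  (forall p q : gpoly R G, in_SG S p -> in_SG S q ->
     (forall h, f h = gmul p q h) -> ~ is_monomial p -> ~ is_monomial q -> False) ->
  monolithic S f.
Proof.
move=> f_nz no_factor; split=> // p q Sp Sq fpq.
by apply: NNPP => /not_or_and[np nq]; apply: no_factor fpq np nq.
Qed.

Theorem lemma3p2 (R : idomainType) (S : {pred R}) (G : zmodType) (le : rel G)
  (hS : semidomain S) (hred : additively_reduced S)
  (htf : torsion_free G) (hle : compatible_total_order le)
  (n : nat) (s : nat -> R) (g : nat -> G)
  (hs : forall i, (i <= n)%N -> s i \in S /\ s i != 0)
  (hg : forall i, (i < n)%N -> ltof le (g i.+1) (g i)) :
  let f := fun h : G => \sum_(i < n.+1 | g i == h) s i in
  ((2 <= n.+1)%N -> ltof le (g 1%N *+ 2) (g 0%N + g n) -> monolithic S f) /\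
  ((3 < n.+1)%N -> le (g 1%N *+ 2) (g 0%N + g n) -> monolithic S f).
Proof.
move=> f.
have f_nz : exists h, f h != 0.
  by exists (g 0%N); apply: (sum_terms_at_neq0 hS hred _ hs).
suff no_factor p q : in_SG S p -> in_SG S q -> (forall h, f h = gmul p q h) ->
    ~ is_monomial p -> ~ is_monomial q ->
    ~~ ltof le (g 1%N *+ 2) (g 0%N + g n) /\
    ((3 <= n)%N -> ~ le (g 1%N *+ 2) (g 0%N + g n)).
  split=> hn hg1; apply: monolithic_intro => // p q Sp Sq fpq np nq.
    by have [/negP] := no_factor p q Sp Sq fpq np nq.
  by have [_] := no_factor p q Sp Sq fpq np nq; apply.
move=> Sp Sq fpq np nq; have [sub cover] := factor_sumset hS hred hs Sp Sq fpq.
have [a0 [a1 topA]] := nonmonomial_top_two hle np.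
have [b0 [b1 topB]] := nonmonomial_top_two hle nq.
split; first exact: (sumset_not_lt hle hg topA topB sub cover).
exact: (sumset_not_le hle hg topA topB sub cover).
Qed.
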